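(* Let $\mathcal{G}^{c}=(\mathbb{C},\mathbb{E}^{c})$ be a C-DMG over DMGs, let $\mathbb{C}_X,\mathbb{C}_Y,\mathbb{C}_W$ be pairwise disjoint subsets of $\mathbb{C}$, and set $X=\bigcup_{C\in\mathbb{C}_X}C$, $Y=\bigcup_{C\in\mathbb{C}_Y}C$, $W=\bigcup_{C\in\mathbb{C}_W}C$. If $\mathbb{C}_X$ and $\mathbb{C}_Y$ are not $\sigma$-separated by $\mathbb{C}_W$ in $\mathcal{G}^{c}$, then there exists a DMG $\mathcal{G}=(\mathbb{V},\mathbb{E})$ compatible with $\mathcal{G}^{c}$ in which $X$ and $Y$ are not $\sigma$-separated by $W$.
   Context: A directed mixed graph (DMG) $\mathcal{G}=(\mathbb{V},\mathbb{E})$ has directed edges $\to$ and bidirected edges $\leftrightarrow$, cycles allowed; the DMGs considered are those induced by input/output structural causal models (ioSCMs, Forré–Mooij 2020): vertices are the endogenous and input variables, $U\to V$ if $U$ is an argument of the causal mechanism of $V$, and $U\leftrightarrow V$ if some latent variable is a parent of both. A C-DMG over DMGs $\mathcal{G}^c=(\mathbb{C},\mathbb{E}^c)$ is obtained from such a DMG $\mathcal{G}=(\mathbb{V},\mathbb{E})$ as follows: $\mathbb{C}$ is a partition of $\mathbb{V}$ into nonempty clusters, and for all $C_i,C_j\in\mathbb{C}$ (possibly equal) the edge $C_i\to C_j$ (resp. $C_i\leftrightarrow C_j$) is in $\mathbb{E}^c$ iff there exist $V_i\in C_i,V_j\in C_j$ with $V_i\to V_j$ (resp. $V_i\leftrightarrow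 V_j$) in $\mathbb{E}$; such $\mathcal{G}$ is called compatible with $\mathcal{G}^c$. In any such graph, ancestors and descendants include the vertex itself, and the strongly connected component of $V$ is $\mathrm{Sc}(V)=\mathrm{Anc}(V)\cap\mathrm{Desc}(V)$. Write $A\mathbin{*\!\!\to} B$ for an edge $A\to B$ or $A\leftrightarrow B$, and $A\mathbin{\leftarrow\!\!*} B$ for $A\leftarrow B$ or $A\leftrightarrow B$. A walk $\langle V_1,\dots,V_n\rangle$ is $\sigma$-blocked by a set $W$ if: (1) $V_1\in W$ or $V_n\in W$; or (2) for some $1<i<n$, $V_{i-1}\mathbin{*\!\!\to}V_i\mathbin{\leftarrow\!\!*}V_{i+1}$ on the walk and $V_i\notin W$; or (3) for some $1<i<n$, $V_{i-1}\leftarrow V_i\mathbin{\leftarrow\!\!*}V_{i+1}$ on the walk and $V_i\in W\setminus \mathrm{Sc}(V_{i-1})$; or (4) for some $1<i<n$, $V_{i-1}\mathbin{*\!\!\to}V_i\to V_{i+1}$ on the walk and $V_i\in W\setminus\mathrm{Sc}(V_{i+1})$; or (5) for some $1<i<n$, $V_{i-1}\leftarrow V_i\to V_{i+1}$ on the walk and $V_i\in W\setminus(\mathrm{Sc}(V_{i-1})\cap\mathrm{Sc}(V_{i+1}))$. For disjoint vertex sets $X,Y,W$, $W$ $\sigma$-separates $X$ and $Y$ if every walk from a vertex of $X$ to a vertex of $Y$ is $\sigma$-blocked by $W$. *)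

From mathcomp Require Import all_boot.
Set Implicit Arguments. Unset Strict Implicit. Unset Printing Implicit Defensive.

(* A directed mixed graph on a finite vertex type T is given by a relation
   [dir] (u -> v iff dir u v) and a relation [bi] (u <-> v iff bi u v). *)

(* Edge marks along a walk, relative to consecutive vertices a, b:
   Fwd : a -> b,  Bwd : a <- b,  Bid : a <-> b. *)
Inductive mark := Fwd | Bwd | Bid.

Section Walks.
Variables (T : finType) (dir bi : rel T).

Definition edge_ok (e : mark) (a b : T) : bool :=
  match e with Fwd => dir a b | Bwd => dir b a | Bid => bi a b end.

Fixpoint is_walk (x : T) (s : seq (mark * T)) : bool :=
  match s with
  | [::] => true
  | (e, y) :: s' => edge_ok e x y && is_walk y s'
  end.

Definition walk_end (x : T) (s : seq (mark * T)) : T := last x (map snd s).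

Definition Sc (v : T) : pred T := [pred u | connect dir u v && connect dir v u].

(* arrowhead at the middle vertex from the left / right edge *)
Definition head_left (e : mark) : bool := match e with Bwd => false | _ => true end.
Definition head_right (e : mark) : bool := match e with Fwd => false | _ => true end.
Definition tail_left (e : mark) : bool := match e with Bwd => true | _ => false end.
Definition tail_right (e : mark) : bool := match e with Fwd => true | _ => false end.

Variable W : {set T}.

Definition triple_blocked (a : T) (e1 : mark) (b : T) (e2 : mark) (c : T) : bool :=
  [|| head_left e1 && head_right e2 && (b \notin W),
      tail_left e1 && head_right e2 && (b \in W) && (b \notin Sc a),
      head_left e1 && tail_right e2 && (b \in W) && (b \notin Sc c)
    | tail_left e1 && tail_right e2 && (b \in W) && ~~ ((b \in Sc a) && (b \in Sc c))].

Fixpoint interior_blocked (x : T) (s : seq (mark * T)) : bool :=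
  match s with
  | (e1, y) :: (((e2, z) :: _) as s') =>
      triple_blocked x e1 y e2 z || interior_blocked y s'
  | _ => false
  end.

Definition sigma_blocked (x : T) (s : seq (mark * T)) : bool :=
  [|| x \in W, walk_end x s \in W | interior_blocked x s].

Definition sigma_separated (X Y : {set T}) : Prop :=
  forall (x : T) (s : seq (mark * T)),
    x \in X -> walk_end x s \in Y -> is_walk x s -> sigma_blocked x s.

End Walks.

(* DMGs induced by ioSCMs: bidirected edges are symmetric; no self-loops. *)
Definition is_DMG (V : finType) (dir bi : rel V) : Prop :=
  symmetric bi /\ irreflexive bi /\ irreflexive dir.

(* cluster graph induced by a partition given by the cluster map cl *)
Definition cluster_rel (V C : finType) (cl : V -> C) (e : rel V) : rel C :=
  fun c d => [exists u : V, exists v : V, [&& cl u == c, cl v == d & e u v]].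

Definition compatible (V C : finType) (cl : V -> C) (Edir Ebi : rel C)
    (dir bi : rel V) : Prop :=
  [/\ is_DMG dir bi, cluster_rel cl dir =2 Edir & cluster_rel cl bi =2 Ebi].

Definition is_CDMG (V C : finType) (cl : V -> C) (Edir Ebi : rel C) : Prop :=
  (forall c : C, exists v : V, cl v = c) /\
  exists dir bi : rel V, compatible cl Edir Ebi dir bi.

From mathcomp Require Import all_boot.

Set Implicit Arguments. Unset Strict Implicit. Unset Printing Implicit Defensive.

(* Take the largest compatible DMG: join two distinct vertices whenever their
   clusters are joined.  Since every cluster edge of a C-DMG over DMGs is
   witnessed by two distinct vertices, every vertex has a distinct neighbour in
   each adjacent cluster, so every walk of the cluster graph lifts to a walk of
   this DMG, and so does every directed path between distinct clusters.  Hence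
   two adjacent vertices lie in the same strongly connected component as soon
   as their clusters do, and each blocking condition on the lifted walk
   implies the same condition on the cluster walk. *)

Definition lift_rel (V C : finType) (cl : V -> C) (E : rel C) : rel V :=
  fun u v => E (cl u) (cl v) && (u != v).

Definition cluster_walk (V C : finType) (cl : V -> C) (t : seq (mark * V)) :
  seq (mark * C) := [seq (p.1, cl p.2) | p <- t].

Definition distinctly_witnessed (V C : finType) (cl : V -> C) (E : rel C) :=
  forall c d, E c d -> exists a b, [/\ cl a = c, cl b = d & a != b].

Section ClusterRel.

Variables (V C : finType) (cl : V -> C).

Lemma cluster_rel_witnessed (e : rel V) :
  irreflexive e -> distinctly_witnessed cl (cluster_rel cl e).
Proof.
move=> irr_e c d /existsP[a /existsP[b /and3P[/eqP <- /eqP <- eab]]].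
exists a, b; split=> //; apply: contraTneq eab => ->; exact/negbT.
Qed.

Lemma cluster_rel_sym (e : rel V) : symmetric e -> symmetric (cluster_rel cl e).
Proof.
move=> sym_e c d; apply/existsP/existsP=> -[a /existsP[b /and3P[ha hb eab]]];
  by exists b; apply/existsP; exists a; rewrite ha hb sym_e.
Qed.

Lemma cluster_rel_lift (E : rel C) :
  distinctly_witnessed cl E -> cluster_rel cl (lift_rel cl E) =2 E.
Proof.
move=> wE c d; apply/existsP/idP.
  by case=> a /existsP[b /and3P[/eqP <- /eqP <- /andP[]]].
move=> Ecd; have [a [b [ha hb ab]]] := wE c d Ecd.
by exists a; apply/existsP; exists b; rewrite /lift_rel ha hb Ecd ab !eqxx.
Qed.

Lemma lift_compatible (Edir Ebi : rel C) :
  distinctly_witnessed cl Edir -> distinctly_witnessed cl Ebi -> symmetric Ebi ->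
  compatible cl Edir Ebi (lift_rel cl Edir) (lift_rel cl Ebi).
Proof.
move=> wdir wbi Ebi_sym; split; [|exact: cluster_rel_lift..].
split; first by move=> u v; rewrite /lift_rel Ebi_sym eq_sym.
by split=> u; rewrite /lift_rel eqxx andbF.
Qed.

End ClusterRel.

Lemma walk_end_cluster (V C : finType) (cl : V -> C) (u : V) (t : seq (mark * V)) :
  walk_end (cl u) (cluster_walk cl t) = cl (walk_end u t).
Proof.
by rewrite /walk_end -map_comp (@eq_map _ _ _ (cl \o snd)) // map_comp last_map.
Qed.

Section LiftPaths.

Variables (V C : finType) (cl : V -> C).
Hypothesis cl_surj : forall c, exists v, cl v = c.
Variable E : rel C.
Hypothesis wE : distinctly_witnessed cl E.

Lemma lift_succ u d : E (cl u) d -> exists2 w, cl w = d & lift_rel cl E u w.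
Proof.
move=> Eud; have [a [b [ha hb ab]]] := wE Eud.
case: (eqVneq (cl u) d) => [ud | ud]; last first.
  have [w hw] := cl_surj d; exists w => //.
  by rewrite /lift_rel hw Eud; apply: contra_neq ud => ->.
case: (eqVneq a u) => [au | au].
  by exists b; rewrite // /lift_rel hb Eud -au.
exists a; first by rewrite ha.
by rewrite /lift_rel ha {2}ud Eud eq_sym.
Qed.

Lemma connect_lift_path p u v :
  path E (cl u) p -> p != [::] -> cl v = last (cl u) p ->
  connect (lift_rel cl E) u v.
Proof.
elim: p u => [|c p IH] u //= /andP[Euc Ep] _.
case: p IH Ep => [|c' p] IH Ep /= hv.
  have [-> | uv] := eqVneq u v; first exact: connect0.
  by apply: connect1; rewrite /lift_rel hv Euc uv.
have [w hw Euw] := lift_succ Euc.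
by apply: connect_trans (connect1 Euw) _; apply: IH; rewrite ?hw.
Qed.

Lemma connect_lift u v :
  cl u != cl v -> connect E (cl u) (cl v) -> connect (lift_rel cl E) u v.
Proof.
move=> uv /connectP[[|c p] Ep hv]; first by rewrite hv eqxx in uv.
exact: connect_lift_path Ep _ hv.
Qed.

Lemma lift_rel_Sc a b :
  lift_rel cl E b a -> cl b \in Sc E (cl a) -> b \in Sc (lift_rel cl E) a.
Proof.
rewrite !inE => Eba /andP[_ ab]; rewrite (connect1 Eba) /=.
have [eab | neab] := eqVneq (cl a) (cl b); last exact: connect_lift.
by apply: connect1; move: Eba; rewrite /lift_rel eab (eq_sym a).
Qed.

End LiftPaths.

Section LiftWalks.

Variables (V C : finType) (cl : V -> C).
Hypothesis cl_surj : forall c, exists v, cl v = c.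
Variables Edir Ebi : rel C.
Hypotheses (wdir : distinctly_witnessed cl Edir) (wbi : distinctly_witnessed cl Ebi).

Local Notation dirV := (lift_rel cl Edir).
Local Notation biV := (lift_rel cl Ebi).

Lemma lift_pred u c : Edir c (cl u) -> exists2 w, cl w = c & dirV w u.
Proof.
have wflip : distinctly_witnessed cl (fun c d => Edir d c).
  by move=> c' d' /wdir[a [b [ha hb ab]]]; exists b, a; rewrite eq_sym.
move=> Ecu; have [w hw Euw] := lift_succ cl_surj wflip Ecu.
by exists w; move: Euw; rewrite // /lift_rel eq_sym.
Qed.

Lemma lift_edge e u c :
  edge_ok Edir Ebi e (cl u) c -> exists2 w, cl w = c & edge_ok dirV biV e u w.
Proof. by case: e => /=; [apply: lift_succ | apply: lift_pred | apply: lift_succ]. Qed.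

Lemma lift_walk s u :
  is_walk Edir Ebi (cl u) s -> exists2 t, is_walk dirV biV u t & cluster_walk cl t = s.
Proof.
elim: s u => [|[e c] s IH] u /=; first by exists [::].
case/andP=> Euc walk_s; have [w hw Euw] := lift_edge Euc.
rewrite -hw in walk_s; have [t walk_t <-] := IH w walk_s.
by exists ((e, w) :: t); rewrite /= ?Euw ?hw.
Qed.

Variable W : {set C}.

Lemma triple_blocked_cluster a e1 b e2 c :
  edge_ok dirV biV e1 a b -> edge_ok dirV biV e2 b c ->
  triple_blocked dirV (cl @^-1: W) a e1 b e2 c ->
  triple_blocked Edir W (cl a) e1 (cl b) e2 (cl c).
Proof.
move=> ab bc.
have Sca : tail_left e1 -> cl b \in Sc Edir (cl a) -> b \in Sc dirV a.
  by case: e1 ab => //= ab _; apply: lift_rel_Sc.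
have Scc : tail_right e2 -> cl b \in Sc Edir (cl c) -> b \in Sc dirV c.
  by case: e2 bc => //= bc _; apply: lift_rel_Sc.
rewrite /triple_blocked inE; move: Sca Scc.
case: e1 {ab}; case: e2 {bc} => /=; case: (cl b \in W);
  case: (b \in Sc _ a); case: (b \in Sc _ c);
  case: (cl b \in Sc _ (cl a)); case: (cl b \in Sc _ (cl c)) => //= Sca Scc _;
  by [apply: Sca | apply: Scc].
Qed.

Lemma interior_blocked_cluster u t :
  is_walk dirV biV u t -> interior_blocked dirV (cl @^-1: W) u t ->
  interior_blocked Edir W (cl u) (cluster_walk cl t).
Proof.
elim: t u => [|[e1 y] t IH] u //=; case: t IH => [|[e2 z] t] IH //=.
case/andP=> uy /andP[yz walk_t] /orP[blk | blk]; apply/orP.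
  by left; apply: triple_blocked_cluster uy yz blk.
by right; apply: IH blk; rewrite /= yz.
Qed.

Lemma sigma_blocked_cluster u t :
  is_walk dirV biV u t -> sigma_blocked dirV (cl @^-1: W) u t ->
  sigma_blocked Edir W (cl u) (cluster_walk cl t).
Proof.
rewrite /sigma_blocked walk_end_cluster !inE => walk_t.
by case/or3P=> [-> | -> | /(interior_blocked_cluster walk_t) ->]; rewrite ?orbT.
Qed.

Lemma lift_not_sigma_separated (X Y : {set C}) :
  ~ sigma_separated Edir Ebi W X Y ->
  ~ sigma_separated dirV biV (cl @^-1: W) (cl @^-1: X) (cl @^-1: Y).
Proof.
move=> not_sep sepV; apply: not_sep => x s; have [u <-] := cl_surj x.
move=> Xu Ys /lift_walk[t walk_t ts]; rewrite -ts.
by apply: sigma_blocked_cluster walk_t (sepV _ _ _ _ walk_t); rewrite inE -?walk_end_cluster ?ts.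
Qed.

End LiftWalks.

Theorem theorem2 (V C : finType) (cl : V -> C) (Edir Ebi : rel C)
    (hC : is_CDMG cl Edir Ebi)
    (CX CY CW : {set C})
    (hXY : [disjoint CX & CY]) (hXW : [disjoint CX & CW]) (hYW : [disjoint CY & CW]) :
  ~ sigma_separated Edir Ebi CW CX CY ->
  exists dir bi : rel V,
    compatible cl Edir Ebi dir bi /\
    ~ sigma_separated dir bi (cl @^-1: CW) (cl @^-1: CX) (cl @^-1: CY).
Proof.
move=> not_sep; case: hC => cl_surj [dir0 [bi0 [[bi0_sym [bi0_irr dir0_irr]] Edir_def Ebi_def]]].
have wdir : distinctly_witnessed cl Edir.
  by move=> c d; rewrite -Edir_def; apply: cluster_rel_witnessed.
have wbi : distinctly_witnessed cl Ebi.
  by move=> c d; rewrite -Ebi_def; apply: cluster_rel_witnessed.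
have Ebi_sym : symmetric Ebi by move=> c d; rewrite -!Ebi_def cluster_rel_sym.
exists (lift_rel cl Edir), (lift_rel cl Ebi); split; first exact: lift_compatible.
exact: lift_not_sigma_separated.
Qed.
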